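(* Let $\mathcal N=\{N_1,\ldots,N_\ell\}$ ($\ell\ge4$) be a family of $k$-sets satisfying properties (i) and (ii) below, $m=|V|-k$, and fix any run of the decomposition process described in the context. Then the number of indices $x\in\{1,\dots,\ell\}$ with $|\Gamma_x|\ge m^{1/3}$ (heavy $k$-sets) is at most $3m^{2/3}$.
   Context: Setting: $k\ge3$, $\mathcal N=\{N_1,\dots,N_\ell\}$ a family of $k$-subsets, $V=\bigcup N_i$, $n=|V|$, $m=n-k$, satisfying (i) $\bigcap_{i}N_i=\varnothing$ but $\bigcap_{j\ne i}N_j\ne\varnothing$ for all $i$; (ii) every $S\subseteq V$ with $|S|\ge k+1$ contains a $3$-set $T$ not contained in any $N_i$. Assume $\ell\ge4$. Decomposition process: Stage $0$: $\ell_0=\ell$; for each $i\le\ell_0$ choose $a_i^{(0)}\in\bigcap_{r\ne i}N_r$; kernel $A^{(0)}=\{a_1^{(0)},\dots,a_{\ell_0}^{(0)}\}$. Having defined stages $0,\dots,j$ (with surviving sets $N_1,\dots,N_{\ell_j}$, $\ell_j\ge4$, and kernels $A^{(0)},\dots,A^{(j)}$), consider $R^{(j)}=\{N_r\setminus\bigcup_{s\le j}A^{(s)} : r\le\ell_j\}$, which has empty intersection. If every subfamily of $R^{(j)}$ minimal with respect to having empty intersection has only $2$ or $3$ members, stop and set $t=j$. Otherwise choose such a minimal subfamily with at least $4$ members; after reindexing assume it consists of the truncations $N_r\setminus\bigcup_{s\le j}A^{(s)}$, $r\le\ell_{j+1}$; choose $a_i^{(j+1)}\in\bigcap_{r\le\ell_{j+1},r\ne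 i}\bigl(N_r\setminus\bigcup_{s\le j}A^{(s)}\bigr)$ for $i\le\ell_{j+1}$, and let $A^{(j+1)}$ be the set of these. Let $A=\bigcup_{s\le t}A^{(s)}$ and $G=V\setminus A$. For each $i$ let $t_i=\max\{j: i\le\ell_j\}$. For $g\in G$, $t_g=\max\{t_i: g\in N_i\}$ and $I_g=\{i: g\in N_i,\ t_i=t_g\}$. For $x\in\{1,\dots,\ell\}$, $\Gamma_x=\{g\in G: I_g=\{x\}\}$. *)

From HB Require Import structures.
From mathcomp Require Import all_boot all_order all_algebra.
Set Implicit Arguments. Unset Strict Implicit. Unset Printing Implicit Defensive.

(* The family N_1,...,N_l is indexed by 'I_l (0-based), sets live in a finType T. *)
Section Decomp.
Variables (T : finType) (l : nat) (N : 'I_l -> {set T}).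

Definition ground : {set T} := \bigcup_(i < l) N i.

Definition prop_i : Prop :=
  \bigcap_(i < l) N i = set0 /\
  forall i : 'I_l, \bigcap_(r < l | r != i) N r != set0.

Definition prop_ii (k : nat) : Prop :=
  forall S : {set T}, S \subset ground -> k.+1 <= #|S| ->
    exists U : {set T}, [/\ U \subset S, #|U| = 3 &
                            forall i : 'I_l, ~~ (U \subset N i)].

(* A run of the decomposition process: t = final stage,
   I j = surviving index set at stage j (I j = {1..l_j} after reindexing),
   a j i = chosen element a_i^{(j)} (for i \in I j). *)
Variables (t : nat) (I : nat -> {set 'I_l}) (a : nat -> 'I_l -> T).

Definition kernel (s : nat) : {set T} := [set a s i | i in I s].
Definition Acum (j : nat) : {set T} := \bigcup_(s < j.+1) kernel s.
Definition trunc (j : nat) (r : 'I_l) : {set T} := N r :\: Acum j.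

Definition minimal_empty (j : nat) (J : {set 'I_l}) : Prop :=
  \bigcap_(r in J) trunc j r = set0 /\
  forall i, i \in J -> \bigcap_(r in J | r != i) trunc j r != set0.

Definition is_run : Prop :=
  [/\ I 0 = setT,
      (forall i : 'I_l, a 0 i \in \bigcap_(r < l | r != i) N r),
      (forall j, j < t ->
         [/\ I j.+1 \subset I j,
             4 <= #|I j.+1|,
             minimal_empty j (I j.+1) &
             forall i, i \in I j.+1 ->
               a j.+1 i \in \bigcap_(r in I j.+1 | r != i) trunc j r]) &
      (forall J : {set 'I_l}, J \subset I t -> minimal_empty t J ->
         2 <= #|J| <= 3)].

Definition A_all : {set T} := Acum t.
Definition Gset : {set T} := ground :\: A_all.

Definition t_idx (i : 'I_l) : nat := \max_(j < t.+1 | i \in I j) j.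
Definition t_elt (g : T) : nat := \max_(i < l | g \in N i) t_idx i.
Definition I_elt (g : T) : {set 'I_l} :=
  [set i | (g \in N i) && (t_idx i == t_elt g)].
Definition Gamma (x : 'I_l) : {set T} := [set g in Gset | I_elt g == [set x]].

End Decomp.

(* Every element of Gamma_x lies in N_x and in no other set surviving to the
   last stage of the process.  Since at least two sets N_y, N_y' survive
   (the last stage keeps at least four indices), all the Gamma_x lie in
   V \ (N_y ∩ N_y'), which has at most 2m elements; and the Gamma_x are
   pairwise disjoint.  Hence at most 2m / m^(1/3) = 2 m^(2/3) of them can have
   m^(1/3) elements or more. *)

From HB Require Import structures.
From mathcomp Require Import all_boot all_order all_algebra.
From mathcomp Require Import all_classical all_reals all_analysis.
From mathcomp Require Import lra.
Import Order.TTheory GRing.Theory Num.Theory.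
Set Implicit Arguments. Unset Strict Implicit. Unset Printing Implicit Defensive.

Lemma sum_card_disjoint_le (I T : finType) (F : I -> {set T}) (U : {set T}) :
  (forall x y g, g \in F x -> g \in F y -> x = y) ->
  (forall x, F x \subset U) ->
  \sum_x #|F x| <= #|U|.
Proof.
move=> F_disj F_sub.
rewrite -sum1_card; under eq_bigr do rewrite -sum1_card.
rewrite (exchange_big_dep (mem U)) /=; last first.
  by move=> x g _; apply: (fintype.subsetP (F_sub x)).
apply: leq_sum => g _; rewrite sum1dep_card.
by apply/card_le1_eqP => x y; rewrite !inE => gx gy; apply: F_disj gy gx.
Qed.

Lemma card_lt_ground (T : finType) (l k : nat) (N : 'I_l -> {set T}) :
  0 < l -> 0 < k -> (forall i, #|N i| = k) ->
  prop_i N -> k < #|ground N|.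
Proof.
move=> l_gt0 k_gt0 N_card [cap0 _].
have [g g_in] : {g | g \in N (Ordinal l_gt0)}.
  by apply/sigW/card_gt0P; rewrite N_card.
have [j _ g_out] : exists2 j, true & g \notin N j.
  apply/exists_inP; rewrite -negb_forall_in; apply/negP => /forall_inP g_all.
  by have /finset.bigcapP := g_all; rewrite cap0 inE.
rewrite -(N_card j); apply: proper_card; apply/properP; split.
  exact: (finset.bigcup_sup j).
by exists g => //; apply/finset.bigcupP; exists (Ordinal l_gt0).
Qed.

Lemma run_last_stage_card (T : finType) (l : nat) (N : 'I_l -> {set T})
    (t : nat) (I : nat -> {set 'I_l}) (a : nat -> 'I_l -> T) :
  is_run N t I a -> 4 <= l -> 4 <= #|I t|.
Proof.
case=> I0 _ run_step _ l_ge4; case: t run_step => [|j] run_step.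
  by rewrite I0 cardsT card_ord.
by case: (run_step j (ltnSn j)).
Qed.

Section LastStage.

Variables (T : finType) (l : nat) (N : 'I_l -> {set T}).
Variables (t : nat) (I : nat -> {set 'I_l}) (a : nat -> 'I_l -> T).

Lemma t_idx_le i : t_idx t I i <= t.
Proof. by apply/bigmax_leqP => j _; rewrite -ltnS. Qed.

Lemma t_idx_last i : i \in I t -> t_idx t I i = t.
Proof.
move=> i_last; apply/eqP; rewrite eqn_leq t_idx_le.
exact: (@leq_bigmax_cond _ _ _ (@ord_max t)).
Qed.

Lemma I_elt_last y g : y \in I t -> g \in N y -> y \in I_elt N t I g.
Proof.
move=> y_last g_in; have t_y := t_idx_last y_last.
have t_g : t_elt N t I g = t.
  apply/eqP; rewrite eqn_leq; apply/andP; split.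
    by apply/bigmax_leqP => i _; exact: t_idx_le.
  by rewrite -{1}t_y; apply: (@leq_bigmax_cond _ _ _ y).
by rewrite inE g_in t_y t_g eqxx.
Qed.

Lemma Gamma_disjoint x y g :
  g \in Gamma N t I a x -> g \in Gamma N t I a y -> x = y.
Proof.
by rewrite !inE => /andP[_ /eqP gx] /andP[_ /eqP gy]; apply: set1_inj; rewrite -gx.
Qed.

Lemma Gamma_last_stage x y g :
  y \in I t -> g \in Gamma N t I a x -> g \in N y -> y = x.
Proof.
move=> y_last + g_in; rewrite inE => /andP[_ /eqP Ig].
by have := I_elt_last y_last g_in; rewrite Ig inE => /eqP.
Qed.

Lemma Gamma_sub_outside_last_pair x y y' :
  y \in I t -> y' \in I t -> y != y' ->
  Gamma N t I a x \subset ground N :\: (N y :&: N y').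
Proof.
move=> y_last y'_last y_neq; apply/fintype.subsetP => g g_in.
have g_ground : g \in ground N by move: g_in; rewrite !inE => /andP[/andP[_ ->]].
rewrite !inE g_ground andbT; apply/negP => /andP[gy gy'].
have := Gamma_last_stage y_last g_in gy; have := Gamma_last_stage y'_last g_in gy'.
by move=> <- eq_y; rewrite eq_y eqxx in y_neq.
Qed.

Lemma sum_card_Gamma_le k y y' :
  (forall i, #|N i| = k) -> y \in I t -> y' \in I t -> y != y' ->
  \sum_x #|Gamma N t I a x| <= (#|ground N| - k).*2.
Proof.
move=> N_card y_last y'_last y_neq.
have N_sub i : N i \subset ground N by exact: (finset.bigcup_sup i).
apply: leq_trans (sum_card_disjoint_le (@Gamma_disjoint)
  (fun x => Gamma_sub_outside_last_pair x y_last y'_last y_neq)) _.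
rewrite finset.setDIr -addnn; apply: leq_trans (leq_card_setU _ _) _.
by rewrite !cardsDS // !N_card.
Qed.

End LastStage.

Local Open Scope ring_scope.

Lemma card_heavy_mul_le (R : numDomainType) (I : finType) (w : I -> nat) (c : R) :
  0 <= c -> #|[set x | c <= (w x)%:R]|%:R * c <= (\sum_x w x)%:R.
Proof.
move=> c_ge0; rewrite -sum1_card !natr_sum mulr_suml.
rewrite [X in _ <= X](bigID (mem [set x | c <= (w x)%:R])) /= -[X in X <= _]addr0.
apply: lerD; last exact: sumr_ge0.
by apply: ler_sum => x; rewrite inE mul1r.
Qed.

Lemma powR_cbrt_mul_sq (R : realType) (x : R) : 0 <= x -> x `^ 3^-1 * x `^ (2 / 3) = x.
Proof.
have thirds : 3^-1 + 2 / 3 = 1 :> R by lra.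
by move=> x_ge0; rewrite -powRD thirds ?powRr1 ?oner_eq0.
Qed.

Theorem lemma12 (R : realType) (T : finType) (k l : nat) (N : 'I_l -> {set T})
  (t : nat) (I : nat -> {set 'I_l}) (a : nat -> 'I_l -> T) :
  (3 <= k)%N -> (4 <= l)%N ->
  (forall i : 'I_l, #|N i| = k) ->
  prop_i N -> prop_ii N k ->
  is_run N t I a ->
  let m := (#|ground N| - k)%N in
  (#|[set x : 'I_l | (m%:R : R) `^ (3^-1) <= (#|Gamma N t I a x|)%:R]|)%:R
    <= 3 * (m%:R : R) `^ (2 / 3).
Proof.
move=> k_ge3 l_ge4 N_card N_i _ run; cbv zeta; set m := (#|ground N| - k)%N.
have m_gt0 : (0 < m)%N.
  by rewrite subn_gt0 card_lt_ground ?(leq_trans _ k_ge3) ?(leq_trans _ l_ge4).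
have [y [y' [y_last y'_last y_neq]]] : exists y y', [/\ y \in I t, y' \in I t & y != y'].
  by apply/card_gt1P; rewrite (leq_trans _ (run_last_stage_card run l_ge4)).
have sum_le := sum_card_Gamma_le a N_card y_last y'_last y_neq.
set c := (m%:R : R) `^ 3^-1; set d := (m%:R : R) `^ (2 / 3).
have c_gt0 : 0 < c by rewrite powR_gt0 // ltr0n.
have d_ge0 : 0 <= d by rewrite powR_ge0.
have heavy_le := card_heavy_mul_le (fun x => #|Gamma N t I a x|) (ltW c_gt0).
have mass_le : #|[set x | c <= (#|Gamma N t I a x|)%:R]|%:R * c <= c * (2 * d).
  apply: le_trans heavy_le _; rewrite (le_trans (_ : _ <= (m.*2)%:R)) ?ler_nat //.
  by rewrite -muln2 natrM -(powR_cbrt_mul_sq (ler0n _ m)) -/c -/d; lra.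
by rewrite mulrC ler_pM2l // in mass_le; lra.
Qed.
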